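(* Let $B\subset\Delta^{re}_+$ and let $\preceq$ be a total order on $B$ satisfying condition CO(ii): whenever $\beta\in B$, $\gamma\in\Delta_+\setminus B$ and $\beta+\gamma\in B$, then $\beta\prec\beta+\gamma$. Then: (1) If $m\delta+\varepsilon$ and $(m+k)\delta+\varepsilon$ both lie in $B$, where $m\in\mathbb Z_{\ge0}$, $k\in\mathbb N$ and $\varepsilon\in\mathring\Delta$, then $m\delta+\varepsilon\prec(m+k)\delta+\varepsilon$. (2) $\preceq$ is a well-order on $B$. (3) If $B=\langle P\rangle$ for some $P\subset\mathring\Delta$, then $B$ has no maximum element with respect to $\preceq$.
   Context: Let $\Delta$ be the root system of an untwisted affine Lie algebra, with null root $\delta$. Let $\mathring\Delta$ be the finite (classical) root system of the underlying finite-dimensional simple Lie algebra. Let $\mathring\Delta_+$ be its positive roots and $\mathring\Delta_-=-\mathring\Delta_+$. Write $\mathbb N=\{1,2,\dots\}$. The positive roots are $\Delta_+=\Delta^{re}_+\amalg\Delta^{im}_+$, where $\Delta^{im}_+=\{n\delta:n\in\mathbb N\}$ and $\Delta^{re}_+=\{m\delta+\varepsilon: m\in\mathbb Z_{\geq 0},\varepsilon\in\mathring\Delta_+\}\cup\{m\delta+\varepsilon: m\in\mathbb N,\varepsilon\in\mathring\Delta_-\}$. For $\varepsilon\in\mathring\Delta$, put $\langle\varepsilon\rangle=\{m\delta+\varepsilon: m\in\mathbb Z_{\ge0}\}\cap\Delta_+$. For $P\subset\mathring\Delta$, put $\langle P\rangle=\bigcup_{\varepsilon\in P}\langle\varepsilon\rangle$.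 *)

From mathcomp Require Import all_boot all_order all_algebra.
Set Implicit Arguments. Unset Strict Implicit. Unset Printing Implicit Defensive.
Import Order.TTheory GRing.Theory Num.Theory.
Local Open Scope ring_scope.

Section RootSystems.
Variables (R : realFieldType) (n : nat).

Definition dotr (u v : 'rV[R]_n) : R := (u *m v^T) 0 0.

Definition is_root_system (Phi : seq 'rV[R]_n) : Prop :=
  [/\ (0 : 'rV[R]_n) \notin Phi,
      (forall v, (forall a, a \in Phi -> dotr a v = 0) -> v = 0),
      (forall a b, a \in Phi -> b \in Phi ->
          b - (2 * dotr b a / dotr a a) *: a \in Phi),
      (forall a b, a \in Phi -> b \in Phi ->
          exists z : int, 2 * dotr b a / dotr a a = z%:~R) &
      (forall (a : 'rV[R]_n) (c : R), a \in Phi -> c *: a \in Phi ->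
          c = 1 \/ c = -1)].

Definition irreducible_rs (Phi : seq 'rV[R]_n) : Prop :=
  Phi != [::] /\
  forall X : 'rV[R]_n -> Prop,
    (forall a b, a \in Phi -> b \in Phi -> X a -> ~ X b -> dotr a b = 0) ->
    (forall a, a \in Phi -> X a) \/ (forall a, a \in Phi -> ~ X a).

(* t is a regular vector: it defines the positive system {a | (t,a) > 0} *)
Definition regular_vec (Phi : seq 'rV[R]_n) (t : 'rV[R]_n) : Prop :=
  forall a, a \in Phi -> dotr t a != 0.

Definition fpos (Phi : seq 'rV[R]_n) (t a : 'rV[R]_n) : Prop :=
  a \in Phi /\ 0 < dotr t a.
Definition fneg (Phi : seq 'rV[R]_n) (t a : 'rV[R]_n) : Prop :=
  a \in Phi /\ dotr t a < 0.

(* Affine roots: the element m*delta + v is encoded as the pair (m, v). *)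
Definition aroot := (int * 'rV[R]_n)%type.
Definition aadd (x y : aroot) : aroot := (x.1 + y.1, x.2 + y.2).

Definition re_pos (Phi : seq 'rV[R]_n) (t : 'rV[R]_n) (x : aroot) : Prop :=
  (0 <= x.1 /\ fpos Phi t x.2) \/ (1 <= x.1 /\ fneg Phi t x.2).
Definition im_pos (x : aroot) : Prop := 1 <= x.1 /\ x.2 = 0.
Definition apos (Phi : seq 'rV[R]_n) (t : 'rV[R]_n) (x : aroot) : Prop :=
  re_pos Phi t x \/ im_pos x.

Definition span_of (Phi : seq 'rV[R]_n) (t : 'rV[R]_n)
  (P : 'rV[R]_n -> Prop) (x : aroot) : Prop :=
  P x.2 /\ 0 <= x.1 /\ apos Phi t x.

Definition total_order_on (B : aroot -> Prop) (le : aroot -> aroot -> Prop) :=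
  [/\ (forall x, B x -> le x x),
      (forall x y, B x -> B y -> le x y -> le y x -> x = y),
      (forall x y z, B x -> B y -> B z -> le x y -> le y z -> le x z) &
      (forall x y, B x -> B y -> le x y \/ le y x)].

Definition strict (le : aroot -> aroot -> Prop) x y := le x y /\ x <> y.

End RootSystems.

From mathcomp Require Import all_boot all_order all_algebra.
From mathcomp Require Import zify.
From Stdlib Require Import Classical Wf_nat.
Set Implicit Arguments. Unset Strict Implicit. Unset Printing Implicit Defensive.
Import Order.TTheory GRing.Theory Num.Theory.
Local Open Scope ring_scope.

(* CO(ii) applied to beta = m delta + eps and the imaginary root gamma = k delta
   (never in B, since B consists of real roots) shows that the order increases
   along each string m delta + eps, m >= 0.  Such a string is order-isomorphic
   to a subset of N, so every nonempty subset of B meets each of the finitely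
   many strings (one for each eps in the finite root system) in a set with a
   least element, and the least of these finitely many minima is the minimum.
   For B = <P>, the successor (m+1) delta + eps of a maximum would lie in B
   and be strictly larger. *)

Lemma exists_least_nat (P : nat -> Prop) :
  (exists k, P k) -> exists k, P k /\ forall j, P j -> (k <= j)%N.
Proof.
move=> exP; have [k [[Pk kmin] _]] :=
  dec_inh_nat_subset_has_unique_least_element P (fun k => classic (P k)) exP.
by exists k; split=> // j /kmin /ssrnat.leP.
Qed.

Section LeastElements.
Variables (T : Type) (B : T -> Prop) (le : T -> T -> Prop).
Hypothesis le_trans : forall x y z, B x -> B y -> B z -> le x y -> le y z -> le x z.
Hypothesis le_total : forall x y, B x -> B y -> le x y \/ le y x.

Definition has_least (S : T -> Prop) :=
  (exists x, S x) -> exists x, S x /\ forall y, S y -> le x y.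

Lemma has_leastU (S A C : T -> Prop) :
  (forall x, S x <-> A x \/ C x) -> (forall x, S x -> B x) ->
  has_least A -> has_least C -> has_least S.
Proof.
move=> defS SB leastA leastC [x Sx].
have BA a : A a -> B a by move=> Aa; apply/SB/defS; left.
have BC c : C c -> B c by move=> Cc; apply/SB/defS; right.
have [[a Aa]|noA] := classic (exists a, A a); last first.
  have [y /defS [Ay|Cy]] := ex_intro S x Sx; first by case: noA; exists y.
  have [c [Cc minc]] := leastC (ex_intro C y Cy).
  exists c; split=> [|z /defS [Az|Cz]]; [by apply/defS; right | | exact: minc].
  by case: noA; exists z.
have [a' [Aa' mina]] := leastA (ex_intro A a Aa).
have [[c Cc]|noC] := classic (exists c, C c); last first.
  exists a'; split=> [|z /defS [Az|Cz]]; [by apply/defS; left | exact: mina |].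
  by case: noC; exists z.
have [c' [Cc' minc]] := leastC (ex_intro C c Cc).
have [ac|ca] := le_total (BA _ Aa') (BC _ Cc').
- exists a'; split=> [|z /defS [Az|Cz]]; [by apply/defS; left | exact: mina |].
  exact: le_trans (BA _ Aa') (BC _ Cc') (BC _ Cz) ac (minc _ Cz).
- exists c'; split=> [|z /defS [Az|Cz]]; [by apply/defS; right | | exact: minc].
  exact: le_trans (BC _ Cc') (BA _ Aa') (BA _ Az) ca (mina _ Az).
Qed.

Lemma has_least_finite_keys (K : eqType) (key : T -> K) (keys : seq K) :
  (forall k S, (forall x, S x -> B x /\ key x = k) -> has_least S) ->
  forall S, (forall x, S x -> B x /\ key x \in keys) -> has_least S.
Proof.
move=> least_fiber; elim: keys => [|k keys IH] S Skeys.
  by move=> [x /Skeys []].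
apply: (has_leastU (A := fun x => S x /\ key x = k)
                   (C := fun x => S x /\ key x != k)).
- by move=> x; case: (eqVneq (key x) k); intuition.
- by move=> x /Skeys [].
- by apply: least_fiber => x [/Skeys [Bx _] ->].
- apply: IH => x [/Skeys [Bx]]; rewrite inE => /orP [/eqP-> /eqP //|].
  by split.
Qed.

End LeastElements.

Lemma re_pos_root (R : realFieldType) (n : nat) (Phi : seq 'rV[R]_n) t x :
  re_pos Phi t x -> x.2 \in Phi /\ 0 <= x.1.
Proof. by case=> [[? []] | [? []]] //; split=> //; lia. Qed.

Lemma apos_shift (R : realFieldType) (n : nat) (Phi : seq 'rV[R]_n) t x (k : int) :
  0 <= k -> apos Phi t x -> apos Phi t (x.1 + k, x.2).
Proof.
move=> k_ge0 [[[m_ge0 pos]|[m_ge1 neg]]|[m_ge1 x2_0]].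
- by left; left; split=> //=; lia.
- by left; right; split=> //=; lia.
- by right; split=> //=; lia.
Qed.

Section CO2Order.
Variables (R : realFieldType) (n : nat) (Phi : seq 'rV[R]_n) (t : 'rV[R]_n).
Variables (B : aroot R n -> Prop) (le : aroot R n -> aroot R n -> Prop).
Hypothesis Phi_neq0 : (0 : 'rV[R]_n) \notin Phi.
Hypothesis B_re_pos : forall x, B x -> re_pos Phi t x.
Hypothesis le_total_order : total_order_on B le.
Hypothesis CO2 : forall beta gamma, B beta -> apos Phi t gamma -> ~ B gamma ->
  B (aadd beta gamma) -> strict le beta (aadd beta gamma).

Lemma B_root x : B x -> x.2 \in Phi /\ 0 <= x.1.
Proof. by move/B_re_pos/re_pos_root. Qed.

Lemma B_string_increasing (m m' : int) eps :
  m < m' -> B (m, eps) -> B (m', eps) -> strict le (m, eps) (m', eps).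
Proof.
move=> lt_mm' Bm Bm'.
have shift : aadd (m, eps) (m' - m, 0) = (m', eps) by rewrite /aadd /= subrKC addr0.
rewrite -shift; apply: CO2 => //; last by rewrite shift.
- by right; split=> //=; lia.
- by move/B_root => [/= Phi0]; move: Phi_neq0; rewrite Phi0.
Qed.

Lemma has_least_string eps S :
  (forall x, S x -> B x /\ x.2 = eps) -> has_least le S.
Proof.
case: le_total_order => le_refl _ _ _ Seps [x0 Sx0].
have [k [[x [Sx xk]] kmin]] :
    exists k, (exists x, S x /\ x.1 = k%:Z) /\
              forall j, (exists y, S y /\ y.1 = j%:Z) -> (k <= j)%N.
  apply: exists_least_nat; exists `|x0.1|%N; exists x0; split=> //.
  by have [/B_root [_ ?] _] := Seps _ Sx0; lia.
exists x; split=> // y Sy.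
have [Bx x2_eps] := Seps _ Sx; have [By y2_eps] := Seps _ Sy.
have /B_root [_ y1_ge0] := By.
have k_le : (k <= `|y.1|)%N by apply: kmin; exists y; split=> //; lia.
have x_eq : x = (k%:Z, eps) by case: x xk x2_eps {Sx Bx} => ? ? /= -> ->.
have y_eq : y = (y.1, eps) by case: y y2_eps {Sy By y1_ge0 k_le} => ? ? /= ->.
have [y1_k | y1_neq] := eqVneq y.1 k%:Z.
  by rewrite y1_k -x_eq in y_eq; rewrite y_eq; apply: le_refl.
have lt_ky : k%:Z < y.1 by lia.
by rewrite x_eq y_eq; apply: (B_string_increasing lt_ky _ _).1; rewrite -?x_eq -?y_eq.
Qed.

Lemma B_well_ordered S : (forall x, S x -> B x) -> has_least le S.
Proof.
case: le_total_order => _ _ le_trans le_total SB.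
apply: (has_least_finite_keys le_trans le_total (key := snd) (keys := Phi)).
  by move=> eps S' S'eps; apply: (has_least_string (eps := eps)).
by move=> x Sx; split; [apply: SB | case: (B_root (SB _ Sx))].
Qed.

Lemma no_max_of_span (P : 'rV[R]_n -> Prop) :
  (forall x, B x <-> span_of Phi t P x) -> ~ exists x, B x /\ forall y, B y -> le y x.
Proof.
case: le_total_order => _ le_anti _ _ defB [[m e] [Bx xmax]].
have Bx1 : B (m + 1, e).
  have [Pe [/= m_ge0 ap]] := proj1 (defB _) Bx.
  apply/defB; split=> //; split; first by rewrite /=; lia.
  exact: (apos_shift (x := (m, e)) (k := 1)).
have m_lt : m < m + 1 by rewrite ltrDl.
have [le_x lt_x] := B_string_increasing m_lt Bx Bx1.
by apply: lt_x; apply: le_anti le_x (xmax _ Bx1).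
Qed.

End CO2Order.

Theorem lemma7p4 (R : realFieldType) (n : nat) (Phi : seq 'rV[R]_n)
  (t : 'rV[R]_n)
  (HPhi : is_root_system Phi) (Hirr : irreducible_rs Phi)
  (Ht : regular_vec Phi t)
  (B : aroot R n -> Prop) (le : aroot R n -> aroot R n -> Prop)
  (HB : forall x, B x -> re_pos Phi t x)
  (Hle : total_order_on B le)
  (CO2 : forall beta gamma, B beta -> apos Phi t gamma -> ~ B gamma ->
           B (aadd beta gamma) -> strict le beta (aadd beta gamma)) :
  [/\ (forall (m : int) (k : nat) (eps : 'rV[R]_n),
         0 <= m -> (0 < k)%N -> eps \in Phi ->
         B (m, eps) -> B (m + k%:Z, eps) -> strict le (m, eps) (m + k%:Z, eps)),
      (forall S : aroot R n -> Prop, (forall x, S x -> B x) -> (exists x, S x) ->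
         exists x, S x /\ forall y, S y -> le x y) &
      (forall P : 'rV[R]_n -> Prop, (forall e, P e -> e \in Phi) ->
         (forall x, B x <-> span_of Phi t P x) ->
         ~ exists x, B x /\ forall y, B y -> le y x)].
Proof.
have [Phi_neq0 _ _ _ _] := HPhi.
split.
- move=> m k eps _ k_gt0 _; apply: (B_string_increasing Phi_neq0 HB CO2); lia.
- by move=> S SB; apply: (B_well_ordered Phi_neq0 HB Hle CO2 SB).
- by move=> P _; apply: (no_max_of_span Phi_neq0 HB Hle CO2).
Qed.
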